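(* Let $\lambda$ be a nonzero real number, $x$ real, and $n\ge0$ an integer. Then $$\sum_{k=0}^{n}\beta_{k,\lambda}(x)\,S_{1,\lambda}(n,k)=n!\sum_{k=0}^{n}\binom{x}{k}\frac{\lambda^{n-k}(1)_{n-k+1,\frac{1}{\lambda}}}{(n-k+1)!}.$$
   Context: For real $y$, $\mu\neq 0$ and integer $k\ge0$: $(y)_{0,\mu}=1$, $(y)_{k,\mu}=y(y-\mu)\cdots(y-(k-1)\mu)$ (used with $\mu=\lambda$ and $\mu=1/\lambda$); $(y)_0=1$, $(y)_k=y(y-1)\cdots(y-k+1)$. The degenerate exponential is $e_\lambda^x(t)=\sum_{k\ge0}(x)_{k,\lambda}t^k/k!=(1+\lambda t)^{x/\lambda}$, $e_\lambda(t)=e^1_\lambda(t)$. The degenerate Bernoulli polynomials are defined by $\frac{t}{e_\lambda(t)-1}e_\lambda^x(t)=\sum_{n\ge0}\beta_{n,\lambda}(x)\frac{t^n}{n!}$. The degenerate Stirling numbers of the first kind are defined by $(x)_{n}=\sum_{k=0}^{n}S_{1,\lambda}(n,k)(x)_{k,\lambda}$ ($n\ge0$). *)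

From mathcomp Require Import all_boot all_order all_algebra.
From mathcomp Require Import reals.
Set Implicit Arguments. Unset Strict Implicit. Unset Printing Implicit Defensive.
Import Order.TTheory GRing.Theory Num.Theory.
Local Open Scope ring_scope.

(* generalized falling factorial (y)_{k,mu} = y (y - mu) ... (y - (k-1) mu) *)
Definition dfall {R : pzRingType} (y mu : R) (k : nat) : R :=
  \prod_(i < k) (y - i%:R * mu).

Definition fall {R : pzRingType} (y : R) (k : nat) : R :=
  \prod_(i < k) (y - i%:R).

(* coefficient of t^j in e_lambda(t) - 1 = sum_{j>=1} (1)_{j,lambda} t^j / j! *)
Definition em1_coef {R : fieldType} (lam : R) (j : nat) : R :=
  if j == 0%N then 0 else dfall 1 lam j / (j`!)%:R.

(* b is the sequence of degenerate Bernoulli polynomials beta_{n,lambda}(x):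
   the generating-function identity  t/(e_lambda(t)-1) e_lambda^x(t)
   = sum_n b n t^n/n!, read as an identity of formal power series in t,
   i.e. (sum_n b n t^n/n!) * (e_lambda(t) - 1) = t * e_lambda^x(t),
   compared coefficientwise (coefficient of t^n). *)
Definition degBernoulli_gf {R : fieldType} (lam x : R) (b : nat -> R) : Prop :=
  forall n : nat,
    \sum_(k < n.+1) (b k / (k`!)%:R) * em1_coef lam (n - k)
    = if n is m.+1 then dfall x lam m / (m`!)%:R else 0.

Definition degStirling1 {R : pzRingType} (lam : R) (S1 : nat -> nat -> R) : Prop :=
  forall (n : nat) (y : R), fall y n = \sum_(k < n.+1) S1 n k * dfall y lam k.

From mathcomp Require Import all_boot all_order all_algebra.
From mathcomp Require Import reals.
From mathcomp Require Import ring.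
Import Order.TTheory GRing.Theory Num.Theory.
Local Open Scope ring_scope.

(** For a positive integer [lam], the averaging functional
    [L f = lam^-1 * \sum_(t < lam) f (x + t)] satisfies [L (Δf) = (f (x + lam) - f x) / lam],
    where [Δf y = f (y + 1) - f y].  By Newton's forward difference formula,
    [L f = lam^-1 * \sum_j binom(lam, j + 1) * Δ^j f (x)] on polynomials, and this expression
    keeps the property for every [lam != 0].  Together with the degenerate Vandermonde identity
    [(y + 1)_{N,lam} = \sum_k binom(N, k) (y)_{k,lam} (1)_{N-k,lam}], it shows that the numbers
    [L ((y)_{k,lam})] obey the recursion that determines [beta_{k,lam}(x)], so the two agree.
    By linearity and the definition of [S_{1,lam}], the left-hand side is therefore
    [L ((y)_n) = lam^-1 * \sum_j binom(lam, j + 1) (n)_j (x)_{n-j}], which is the right-hand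
    side because [lam^m (1)_{m,1/lam} = (lam)_{m,1}]. *)

Lemma size_MXaddC_leqS {R : nzSemiRingType} {p : {poly R}} {c m} :
  (size (p * 'X + c%:P)%R <= m.+1)%N -> (size p <= m)%N.
Proof. by rewrite size_MXaddC; case: ifP => [/andP[/eqP-> _] _|_ //]; rewrite size_poly0. Qed.

Section FiniteDifferences.
Context {R : comNzRingType}.
Implicit Types (f g : R -> R) (p : {poly R}).

Fixpoint diffn (m : nat) (f : R -> R) (y : R) : R :=
  if m is m'.+1 then diffn m' f (y + 1) - diffn m' f y else f y.

Lemma diffnS m f y : diffn m.+1 f y = diffn m f (y + 1) - diffn m f y.
Proof. by []. Qed.

Lemma eq_diffn m {f g} : f =1 g -> diffn m f =1 diffn m g.
Proof. by move=> fg; elim: m => [|m IH] y /=; rewrite ?IH. Qed.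

Lemma diffnSr m f y : diffn m.+1 f y = diffn m (fun z => f (z + 1) - f z) y.
Proof. by elim: m y => [|m IH] y //=; rewrite -!IH. Qed.

Lemma diffnD m f g y :
  diffn m (fun z => f z + g z) y = diffn m f y + diffn m g y.
Proof. by elim: m y => [|m IH] y //=; rewrite !IH opprD addrACA. Qed.

Lemma diffnZ m c f y : diffn m (fun z => c * f z) y = c * diffn m f y.
Proof. by elim: m y => [|m IH] y //=; rewrite !IH mulrBr. Qed.

Lemma diffn_sum m (I : Type) (r : seq I) (c : I -> R) (F : I -> R -> R) y :
  diffn m (fun z => \sum_(i <- r) c i * F i z) y = \sum_(i <- r) c i * diffn m (F i) y.
Proof.
elim: m y => [|m IH] y //=.
by rewrite !IH -sumrB; apply: eq_bigr => i _; rewrite mulrBr.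
Qed.

Lemma diffn_cst m c y : diffn m.+1 (fun=> c) y = 0.
Proof.
elim: m y => [|m IH] y; first exact: subrr.
by rewrite diffnS !IH subrr.
Qed.

Lemma diffn_mulX m f y :
  diffn m (fun z => f z * z) y = diffn m f y * y + m%:R * diffn m.-1 f (y + 1).
Proof.
elim: m y => [|m IH] y; first by rewrite mul0r addr0.
have step : m%:R * (diffn m.-1 f (y + 1 + 1) - diffn m.-1 f (y + 1))
            = m%:R * diffn m f (y + 1) by case: m {IH} => [|m]; rewrite ?mul0r.
rewrite diffnS !IH [diffn m.+1 f y]diffnS mulrSr /= [(_ + 1) * _]mulrDl -step; ring.
Qed.

Lemma diffn_MXaddC m p c y :
  diffn m (horner (p * 'X + c%:P)) y
  = diffn m (horner p) y * y + m%:R * diffn m.-1 (horner p) (y + 1) + (m == 0)%:R * c.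
Proof.
rewrite (eq_diffn m (hornerMXaddC p c)) diffnD diffn_mulX.
by case: m => [|m]; rewrite ?diffn_cst ?mul0r ?mul1r.
Qed.

Lemma diffn_poly_eq0 m p y : (size p <= m)%N -> diffn m (horner p) y = 0.
Proof.
elim/poly_ind: p m y => [|p c IH] m y.
  by case: m => [|m] _; [exact: horner0 | rewrite (eq_diffn _ (@horner0 R)) diffn_cst].
case: m => [|m] le_pm.
  by rewrite leqn0 size_poly_eq0 in le_pm; rewrite /= (eqP le_pm) horner0.
have le_p := size_MXaddC_leqS le_pm.
by rewrite (diffn_MXaddC m.+1) !IH ?leqW // mul0r mulr0 mul0r !addr0.
Qed.

End FiniteDifferences.

Section DegenerateFallingFactorial.
Context {R : comNzRingType}.
Implicit Types (a y mu c : R).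

Lemma dfallSr y mu k : dfall y mu k.+1 = dfall y mu k * (y - k%:R * mu).
Proof. by rewrite /dfall big_ord_recr. Qed.

Lemma dfallSl y mu k : dfall (y + mu) mu k.+1 = (y + mu) * dfall y mu k.
Proof.
rewrite /dfall big_ord_recl mul0r subr0; congr (_ * _).
by apply: eq_bigr => i _; rewrite /bump /= -natr1; ring.
Qed.

Lemma dfall_diff y mu k :
  dfall (y + mu) mu k.+1 - dfall y mu k.+1 = k.+1%:R * mu * dfall y mu k.
Proof. by rewrite dfallSl dfallSr -natr1; ring. Qed.

Lemma fall_dfall1 y k : fall y k = dfall y 1 k.
Proof. by apply: eq_bigr => i _; rewrite mulr1. Qed.

Lemma dfall_scale c a mu k : dfall (c * a) (c * mu) k = c ^+ k * dfall a mu k.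
Proof.
elim: k => [|k IH]; first by rewrite /dfall !big_ord0 mulr1.
by rewrite !dfallSr IH exprSr; ring.
Qed.

Definition dfall_poly mu k : {poly R} := \prod_(i < k) ('X - (i%:R * mu)%:P).

Lemma horner_dfall_poly mu k y : (dfall_poly mu k).[y] = dfall y mu k.
Proof. by rewrite horner_prod; apply: eq_bigr => i _; rewrite hornerXsubC. Qed.

Lemma size_dfall_poly mu k : size (dfall_poly mu k) = k.+1.
Proof. by rewrite size_prod_XsubC /index_enum unlock -enumT size_enum_ord. Qed.

Lemma diffn_fall m n y :
  (m <= n)%N -> diffn m (fall^~ n) y = (n ^_ m)%:R * fall y (n - m).
Proof.
elim: m y => [|m IH] y le_mn; first by rewrite ffactn0 mul1r subn0.
have Enm : (n - m = (n - m.+1).+1)%N by rewrite subnSK.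
rewrite diffnS !IH 1?ltnW // -mulrBr Enm !fall_dfall1 dfall_diff.
by rewrite ffactnSr Enm natrM mulr1 mulrA.
Qed.

End DegenerateFallingFactorial.

Section DegenerateBinomial.
Context {R : numFieldType}.
Implicit Types (a b x y mu lam : R) (p : {poly R}).

Lemma natr_fact_neq0 k : (k`!)%:R != 0 :> R.
Proof. by rewrite pnatr_eq0 -lt0n fact_gt0. Qed.

Lemma natrS_neq0 k : k.+1%:R != 0 :> R.
Proof. by rewrite pnatr_eq0. Qed.

(* [(a)_{k,mu} / k!]; for [mu = 1] this is the binomial coefficient of [a] over [k]. *)
Definition dbinom a mu k := dfall a mu k / (k`!)%:R.

Lemma dbinom0 a mu : dbinom a mu 0 = 1.
Proof. by rewrite /dbinom /dfall big_ord0 fact0 divr1. Qed.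

Lemma dbinomSr a mu k : dbinom a mu k.+1 * k.+1%:R = dbinom a mu k * (a - k%:R * mu).
Proof.
rewrite /dbinom dfallSr factS natrM.
by field; rewrite nat1r natr_fact_neq0 natrS_neq0.
Qed.

Lemma dbinomSl a mu k : dbinom a mu k.+1 * k.+1%:R = a * dbinom (a - mu) mu k.
Proof.
rewrite /dbinom -{1}(subrK mu a) dfallSl subrK factS natrM.
by field; rewrite nat1r natr_fact_neq0 natrS_neq0.
Qed.

Lemma dbinomD a b mu N :
  \sum_(k < N.+1) dbinom a mu k * dbinom b mu (N - k) = dbinom (a + b) mu N.
Proof.
elim: N a b => [|N IH] a b; first by rewrite big_ord1 !dbinom0 mulr1.
apply: (mulIf (natrS_neq0 N)); rewrite dbinomSr -IH !mulr_suml.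
have splitR (k : 'I_N.+1) :
    dbinom a mu k * dbinom b mu (N - k) * (a + b - N%:R * mu)
    = dbinom a mu k.+1 * k.+1%:R * dbinom b mu (N - k)
      + dbinom a mu k * (dbinom b mu (N - k).+1 * (N - k).+1%:R).
  have le_kN : (k <= N)%N by rewrite -ltnS.
  by rewrite !dbinomSr (natrB _ le_kN); ring.
have splitL (k : 'I_N.+2) :
    dbinom a mu k * dbinom b mu (N.+1 - k) * N.+1%:R
    = k%:R * (dbinom a mu k * dbinom b mu (N.+1 - k))
      + (N.+1 - k)%:R * (dbinom a mu k * dbinom b mu (N.+1 - k)).
  have le_kN : (k <= N.+1)%N by rewrite -ltnS.
  by rewrite -mulrDl -natrD (subnKC le_kN) mulrC.
rewrite (eq_bigr _ (fun k _ => splitL k)) (eq_bigr _ (fun k _ => splitR k)) !big_split /=.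
rewrite big_ord_recl [X in _ + X]big_ord_recr /= subnn !mul0r add0r addr0.
congr (_ + _); apply: eq_bigr => k _.
  by rewrite /bump /= add1n subSS mulrCA mulrA.
by rewrite (subSn (ltn_ord k : (k <= N)%N)) mulrC -mulrA.
Qed.

Lemma dbinom_scale lam m :
  lam != 0 -> dbinom lam 1 m = lam ^+ m * dfall 1 lam^-1 m / (m`!)%:R.
Proof.
move=> lam0; have -> : dbinom lam 1 m = dfall (lam * 1) (lam * lam^-1) m / (m`!)%:R.
  by rewrite mulr1 divff.
by rewrite dfall_scale.
Qed.

Lemma newton_forward p M lam x : (size p <= M)%N ->
  \sum_(m < M) dbinom lam 1 m * diffn m (horner p) x = p.[x + lam].
Proof.
elim/poly_ind: p M lam x => [|p c IH] M lam x le_pM.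
  by rewrite horner0 big1 // => m _; rewrite diffn_poly_eq0 ?size_poly0 ?mulr0.
case: M le_pM => [|M] le_pM.
  by rewrite leqn0 size_poly_eq0 in le_pM; rewrite big_ord0 (eqP le_pM) horner0.
have le_p := size_MXaddC_leqS le_pM.
under eq_bigr => m _ do rewrite diffn_MXaddC !mulrDr.
rewrite !big_split /=.
have -> : \sum_(m < M.+1) dbinom lam 1 m * (diffn m (horner p) x * x) = p.[x + lam] * x.
  by rewrite -(IH M.+1) ?leqW // mulr_suml; apply: eq_bigr => m _; rewrite mulrA.
have -> : \sum_(m < M.+1) dbinom lam 1 m * (m%:R * diffn m.-1 (horner p) (x + 1))
          = lam * p.[x + lam].
  rewrite big_ord_recl mul0r mulr0 add0r.
  have -> : x + lam = x + 1 + (lam - 1) by ring.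
  rewrite -(IH M) // mulr_sumr; apply: eq_bigr => m _.
  by rewrite lift0 mulrA dbinomSl -mulrA.
have -> : \sum_(m < M.+1) dbinom lam 1 m * ((m == 0)%:R * c) = c.
  by rewrite big_ord_recl big1 ?dbinom0 ?mul1r ?addr0 // => m _; rewrite mul0r mulr0.
by rewrite hornerMXaddC; ring.
Qed.

Lemma sum_em1_coef_dfall lam y N :
  \sum_(k < N.+1) em1_coef lam (N - k) / (k`!)%:R * dfall y lam k
  = (N`!%:R)^-1 * (dfall (y + 1) lam N - dfall y lam N).
Proof.
rewrite mulrC mulrBl -[dfall (y + 1) lam N / _]/(dbinom (y + 1) lam N).
rewrite -(dbinomD y 1) !big_ord_recr /=.
rewrite subnn dbinom0 mulr1 addrK /em1_coef eqxx !mul0r addr0.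
apply: eq_bigr => k _; rewrite ifF; last by rewrite subn_eq0 leqNgt ltn_ord.
by rewrite /dbinom; ring.
Qed.

End DegenerateBinomial.

Lemma em1_coef1 {R : fieldType} (lam : R) : em1_coef lam 1 = 1.
Proof. by rewrite /em1_coef /dfall big_ord1 mul0r subr0 divr1. Qed.

Lemma degBernoulli_gf_uniq {R : numFieldType} {lam x : R} {b b' : nat -> R} :
  degBernoulli_gf lam x b -> degBernoulli_gf lam x b' -> b =1 b'.
Proof.
move=> gf_b gf_b'; elim/ltn_ind => k IH.
have := gf_b k.+1; rewrite -(gf_b' k.+1) !big_ord_recr /= subnn subSnn em1_coef1.
rewrite -[em1_coef lam 0]/0 !mulr0 !addr0 !mulr1.
under eq_bigr => j _ do rewrite (IH j (ltn_ord j)).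
by move=> /addrI /mulIf; apply; rewrite invr_eq0 natr_fact_neq0.
Qed.

Section DegenerateMean.
Context {R : numFieldType}.
Variables lam x : R.
Implicit Types (f g : R -> R) (p : {poly R}).

(* The functional [L] above, truncated to [Δ^j] with [j < M]: exact on polynomials of
   degree less than [M], where the omitted differences vanish. *)
Definition dmean M f := \sum_(j < M) dbinom lam 1 j.+1 / lam * diffn j f x.

Lemma eq_dmean M {f g} : f =1 g -> dmean M f = dmean M g.
Proof. by move=> fg; apply: eq_bigr => j _; rewrite (eq_diffn j fg). Qed.

Lemma dmeanZ M c f : dmean M (fun y => c * f y) = c * dmean M f.
Proof. by rewrite /dmean mulr_sumr; apply: eq_bigr => j _; rewrite diffnZ mulrCA. Qed.

Lemma dmean_sum M (I : Type) (r : seq I) (c : I -> R) (F : I -> R -> R) :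
  dmean M (fun y => \sum_(i <- r) c i * F i y) = \sum_(i <- r) c i * dmean M (F i).
Proof.
rewrite /dmean; under eq_bigr do rewrite diffn_sum mulr_sumr.
rewrite exchange_big; apply: eq_bigr => i _; rewrite mulr_sumr.
by apply: eq_bigr => j _; rewrite mulrCA.
Qed.

Lemma dmean_poly p M : (size p <= M)%N -> dmean M (horner p) = dmean (size p) (horner p).
Proof.
move=> le_pM; rewrite /dmean.
rewrite [RHS](big_ord_widen M (fun j => dbinom lam 1 j.+1 / lam * diffn j (horner p) x) le_pM).
rewrite [RHS]big_mkcond; apply: eq_bigr => j _; case: ltnP => // le_pj.
by rewrite diffn_poly_eq0 ?mulr0.
Qed.

Lemma dmean_diff p M : (size p <= M.+1)%N ->
  dmean M (fun y => p.[y + 1] - p.[y]) = (p.[x + lam] - p.[x]) / lam.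
Proof.
move=> le_pM; rewrite /dmean -(newton_forward _ _ lam x le_pM) big_ord_recl dbinom0 mul1r.
rewrite -[diffn ord0 _ x]/(p.[x]) [p.[x] + _]addrC addrK mulr_suml; apply: eq_bigr => j _.
by rewrite lift0 -diffnSr mulrAC.
Qed.

Definition dbern k := dmean k.+1 (fun y => dfall y lam k).

Lemma dmean_dfall M k : (k < M)%N -> dmean M (fun y => dfall y lam k) = dbern k.
Proof.
move=> lt_kM; rewrite /dbern -!(eq_dmean _ (horner_dfall_poly lam k)).
by rewrite dmean_poly ?size_dfall_poly // [in RHS]dmean_poly ?size_dfall_poly.
Qed.

Lemma dbern_gf : lam != 0 -> degBernoulli_gf lam x dbern.
Proof.
move=> lam0 N.
have -> : \sum_(k < N.+1) dbern k / (k`!)%:R * em1_coef lam (N - k)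
    = dmean N.+1 (fun y => \sum_(k < N.+1) em1_coef lam (N - k) / (k`!)%:R * dfall y lam k).
  by rewrite dmean_sum; apply: eq_bigr => k _; rewrite dmean_dfall // [RHS]mulrC mulrA mulrAC.
rewrite (eq_dmean _ (fun y => sum_em1_coef_dfall lam y N)) dmeanZ.
rewrite -(eq_dmean _ (fun y => congr2 (fun u v => u - v)
           (horner_dfall_poly lam N (y + 1)) (horner_dfall_poly lam N y))).
rewrite dmean_diff ?size_dfall_poly // !horner_dfall_poly.
case: N => [|N]; first by rewrite /dfall !big_ord0 subrr mul0r mulr0.
rewrite dfall_diff factS natrM.
by field; rewrite nat1r natr_fact_neq0 natrS_neq0 lam0.
Qed.

End DegenerateMean.

Theorem theorem6 (R : realType) (lam x : R) (b : nat -> R) (S1 : nat -> nat -> R) :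
  lam != 0 ->
  degBernoulli_gf lam x b ->
  degStirling1 lam S1 ->
  forall n : nat,
    \sum_(k < n.+1) b k * S1 n k
    = (n`!)%:R * \sum_(k < n.+1)
        (fall x k / (k`!)%:R) *
        (lam ^+ (n - k) * dfall 1 lam^-1 (n - k).+1 / ((n - k).+1`!)%:R).
Proof.
move=> lam0 gf_b S1_fall n.
have b_dbern := degBernoulli_gf_uniq gf_b (dbern_gf lam x lam0).
transitivity (dmean lam x n.+1 (fall^~ n)).
  rewrite (eq_dmean _ _ _ (S1_fall n)) dmean_sum.
  by apply: eq_bigr => k _; rewrite b_dbern dmean_dfall // mulrC.
rewrite /dmean (reindex_inj rev_ord_inj) mulr_sumr; apply: eq_bigr => k _.
have le_kn : (k <= n)%N := ltn_ord k.
rewrite /= subSS diffn_fall ?leq_subr // subKn //.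
have fact_ffact : (n ^_ (n - k))%:R = n`!%:R / k`!%:R :> R.
  by rewrite -(ffact_fact (leq_subr k n)) subKn // natrM mulfK ?natr_fact_neq0.
rewrite fact_ffact dbinom_scale // exprS.
by field; rewrite ?natr_fact_neq0 ?lam0.
Qed.
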